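(* Let $n\ge1$ and let $\mathbf{k}:\mathbb{R}^{2n}\to\mathbb{R}$ be a continuous function such that there is a continuous $\tilde{\mathbf{k}}:\mathbb{R}^n\to\mathbb{R}$ with $\mathbf{k}(x,y)=\tilde{\mathbf{k}}(x-y)$ for all $x,y\in\mathbb{R}^n$. Let $\Omega_S$ be the set of all real $2\times 2n$ matrices of the form $A=\begin{bmatrix} w & 0\\ 0 & -w\end{bmatrix}$, $w\in\mathbb{R}^n$, and \[ \mathcal{M}(\Omega_S)=\operatorname{span}\{\,z\mapsto g(Az):\ A\in\Omega_S,\ g\in C(\mathbb{R}^2,\mathbb{R})\,\},\qquad z\in\mathbb{R}^{2n}. \] Then $\mathbf{k}$ belongs to the closure of $\mathcal{M}(\Omega_S)$ in $C(\mathbb{R}^{2n},\mathbb{R})$ with the topology of uniform convergence on compact sets. In addition, if $\mathbf{k}$ is symmetric, i.e. $\mathbf{k}(x,y)=\mathbf{k}(y,x)$ for all $x,y$, then for every compact set $K\subset\mathbb{R}^{2n}$ and every $\epsilon>0$ there exist positive integers $M_1,M_2$, coefficients $c_j\in\mathbb{R}$, vectors $w_j\in\mathbb{R}^n$ ($j=1,\dots,M_1$) and numbers $t_k\in\mathbb{R}$ ($k=1,\dots,M_2$) such that for all $(x,y)\in K$ \[ \Big|\mathbf{k}(x,y)-\sum_{j=1}^{M_1}\sum_{k=1}^{M_2}\frac{c_j}{M_2}\cos(\langle w_j,x\rangle+t_k)\cos(\langle w_j,y\rangle+t_k)\Big|<\epsilon. \]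
   Context: $\langle\cdot,\cdot\rangle$ is the standard inner product on $\mathbb{R}^n$. *)

(* R : realType, R^m rendered as column vectors 'cV[R]_m
   with the (product) topology of matrix_topology. *)
From HB Require Import structures.
From mathcomp Require Import all_boot all_order all_algebra.
From mathcomp Require Import all_classical all_reals all_analysis.
Set Implicit Arguments. Unset Strict Implicit. Unset Printing Implicit Defensive.
Import Order.TTheory GRing.Theory Num.Theory.
Import numFieldNormedType.Exports.
Local Open Scope classical_set_scope.
Local Open Scope ring_scope.

Definition dotv (R : realType) (n : nat) (u v : 'cV[R]_n) : R :=
  \sum_(i < n) u i ord0 * v i ord0.

Definition OmegaS_mx (R : realType) (n : nat) (w : 'cV[R]_n) : 'M[R]_(1 + 1, n + n) :=
  block_mx w^T 0 0 (- w^T).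

Definition OmegaS (R : realType) (n : nat) : set 'M[R]_(1 + 1, n + n) :=
  [set A | exists w : 'cV[R]_n, A = OmegaS_mx w].

Definition M_OmegaS (R : realType) (n : nat) : set ('cV[R]_(n + n) -> R) :=
  [set f | exists (m : nat) (c : 'I_m -> R) (A : 'I_m -> 'M[R]_(1 + 1, n + n))
             (g : 'I_m -> 'cV[R]_(1 + 1) -> R),
       (forall i, @OmegaS R n (A i)) /\ (forall i, continuous (g i)) /\
       f = (fun z => \sum_(i < m) c i * g i (A i *m z))].

(* closure in C(R^m, R) for the topology of uniform convergence on compacts:
   every basic neighbourhood {f | sup_K |k - f| < eps} of k meets S *)
Definition in_compact_closure (R : realType) (m : nat)
    (S : set ('cV[R]_m -> R)) (k : 'cV[R]_m -> R) : Prop :=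
  forall (K : set 'cV[R]_m) (eps : R), compact K -> 0 < eps ->
    exists f, S f /\ forall z, K z -> `|k z - f z| < eps.

From HB Require Import structures.
From mathcomp Require Import all_boot all_order all_algebra finmap.
From mathcomp Require Import all_classical all_reals all_analysis.
From mathcomp Require Import ring lra.
Set Implicit Arguments. Unset Strict Implicit. Unset Printing Implicit Defensive.
Import Order.TTheory GRing.Theory Num.Theory.
Import numFieldNormedType.Exports.
Local Open Scope classical_set_scope.
Local Open Scope ring_scope.

(* The block matrix [w 0; 0 -w] sends z = (x, y) to (<w, x>, -<w, y>), so M(Omega_S)
   contains every trigonometric polynomial in x - y.  Trigonometric polynomials on
   R^n form an algebra that contains the constants and separates points, hence by
   the Stone-Weierstrass theorem (in its lattice form, using polynomials converging
   to |t| on [-1, 1]) they approximate kt uniformly on the compact set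
   {x - y | (x, y) in K}.  If k is symmetric then kt is even, and averaging an
   approximant p with p(-.) leaves a cosine polynomial sum_j c_j cos <w_j, x - y>;
   finally cos (a - b) = cos a cos b + cos (a + pi/2) cos (b + pi/2) gives the
   announced form with M2 = 2 and phases 0, pi/2. *)

Section AbsPoly.
Variable R : realFieldType.

Fixpoint abs_poly (k : nat) : {poly R} :=
  if k is k'.+1 then abs_poly k' + ('X^2 - abs_poly k' ^+ 2) * (2^-1)%:P else 0.

(* With [e := |t| - q_k(t)] the recursion reads [e' = e (1 - |t| + e/2)]. *)
Lemma abs_poly_bound k (t : R) : `|t| <= 1 ->
  0 <= `|t| - (abs_poly k).[t] <= `|t| /\
  (`|t| - (abs_poly k).[t]) * (1 + k%:R * `|t| / 2) <= `|t|.
Proof.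
move=> t1; have a0 := normr_ge0 t.
have t2 : t ^+ 2 = `|t| ^+ 2 by rewrite real_normK ?num_real.
elim: k => [|k [/andP [e0 ea] ek]].
  by rewrite /= horner0 subr0 mul0r mul0r addr0 mulr1 lexx a0.
rewrite /= !(hornerE, horner_exp) t2 -[k.+1%:R]natr1.
move: t1 e0 ea ek; set a := `|t|; set q := (abs_poly k).[t] => t1 e0 ea ek.
have -> : a - (q + (a ^+ 2 - q ^+ 2) * 2^-1) = (a - q) * (1 - a + (a - q) / 2).
  by field.
move: e0 ea ek; set e := a - q => e0 ea ek.
have k0 := ler0n R k.
have h1 : 0 <= 1 - a + e / 2 by lra.
have h2 : 1 - a + e / 2 <= 1 - a / 2 by lra.
split; first by apply/andP; split; [exact: mulr_ge0 | nra].
have h : (1 - a + e / 2) * (1 + (k%:R + 1) * a / 2) <= 1 + k%:R * a / 2 by nra.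
rewrite -mulrA; apply: le_trans ek; exact: ler_wpM2l.
Qed.

Lemma abs_poly_approx k (t : R) : `|t| <= 1 ->
  `| `|t| - (abs_poly k).[t] | * k%:R <= 2.
Proof.
move=> t1; have [/andP [e0 ea] ek] := abs_poly_bound k t1.
rewrite ger0_norm //; have k0 := ler0n R k.
have [t0|t0] := eqVneq `|t| 0.
  have -> : `|t| - (abs_poly k).[t] = 0 by rewrite t0 in ea; lra.
  by rewrite mul0r.
have a0 : 0 < `|t| by rewrite lt_def t0 normr_ge0.
rewrite -(ler_pM2r a0); nra.
Qed.

End AbsPoly.

Lemma open_lt_continuous (R : realType) (T : topologicalType) (f g : T -> R) :
  continuous f -> continuous g -> open [set z | f z < g z].
Proof.
move=> fc gc; have -> : [set z | f z < g z] = (fun z => g z - f z) @^-1` [set r | 0 < r].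
  by apply/seteqP; split => z /=; rewrite subr_gt0.
apply: open_comp; last exact: open_gt.
by move=> z _; apply: continuousB; [exact: gc | exact: fc].
Qed.

Lemma continuous_mx_entries (T U : topologicalType) (m p : nat)
    (F : T -> 'M[U]_(m, p)) :
  (forall i j, continuous (fun x => F x i j)) -> continuous F.
Proof.
move=> Fc x S [P hP sub].
apply: (filterS (P := [set y | forall i j, P i j (F y i j)])) => [y Py|]; first exact: sub.
apply: filter_forall => i; apply: filter_forall => j.
exact: Fc i j x (P i j) (hP i j).
Qed.

Section StoneWeierstrass.
Variables (R : realType) (T : ptopologicalType) (A : set (T -> R)).
Hypotheses (A_cst : forall c, A (fun=> c))
  (A_add : forall f g, A f -> A g -> A (fun x => f x + g x))
  (A_scale : forall c f, A f -> A (fun x => c * f x))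
  (A_mul : forall f g, A f -> A g -> A (fun x => f x * g x))
  (A_continuous : forall f, A f -> continuous f)
  (A_bounded : forall f, A f -> exists M, forall x, `|f x| <= M).

Lemma A_horner q f : A f -> A (fun x => q.[f x]).
Proof.
move=> Af; elim/poly_ind: q => [|q c IH].
  by under eq_fun do rewrite horner0; exact: A_cst.
under eq_fun do rewrite hornerMXaddC.
by apply: A_add; [exact: A_mul | exact: A_cst].
Qed.

Variable C : set T.

Definition approximable g := forall eps, 0 < eps ->
  exists2 p, A p & forall x, C x -> `|g x - p x| < eps.

Lemma approximable_A f : A f -> approximable f.
Proof. by move=> Af eps e0; exists f => // x _; rewrite subrr normr0. Qed.

Lemma approximable_closed g :
  (forall eps, 0 < eps -> exists2 h, approximable h & forall x, C x -> `|g x - h x| < eps) ->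
  approximable g.
Proof.
move=> gh eps e0; have e2 : 0 < eps / 2 by lra.
have [h /(_ _ e2) [p Ap hp] gh'] := gh _ e2.
exists p => // x Cx; have := hp x Cx; have := gh' x Cx.
have := ler_normD (g x - h x) (h x - p x); rewrite addrA subrK; lra.
Qed.

Lemma approximableD g1 g2 : approximable g1 -> approximable g2 ->
  approximable (fun x => g1 x + g2 x).
Proof.
move=> ap1 ap2 eps e0; have e2 : 0 < eps / 2 by lra.
have [p1 Ap1 H1] := ap1 _ e2; have [p2 Ap2 H2] := ap2 _ e2.
exists (fun x => p1 x + p2 x); first exact: A_add.
move=> x Cx; have := H1 x Cx; have := H2 x Cx.
have := ler_normD (g1 x - p1 x) (g2 x - p2 x).
have -> : g1 x - p1 x + (g2 x - p2 x) = g1 x + g2 x - (p1 x + p2 x) by ring.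
lra.
Qed.

Lemma approximableZ c g : approximable g -> approximable (fun x => c * g x).
Proof.
move=> ap eps e0; have c1 : 0 < `|c| + 1 by have := normr_ge0 c; lra.
have [p Ap H] := ap _ (divr_gt0 e0 c1).
exists (fun x => c * p x); first exact: A_scale.
move=> x Cx; rewrite -mulrBr normrM.
have := H x Cx; rewrite ltr_pdivlMr // => h.
have := normr_ge0 (g x - p x); have := normr_ge0 c; nra.
Qed.

(* [|p| = M |p/M|] is approximated by [M q_k(p/M)], with [|p| <= M] and [k > 2M/eps]. *)
Lemma approximable_norm_A p : A p -> approximable (fun x => `|p x|).
Proof.
move=> Ap eps e0; have [M0 HM0] := A_bounded Ap.
pose M := `|M0| + 1; have M0' : 0 < M by rewrite /M; have := normr_ge0 M0; lra.
have HM x : `|p x| <= M by apply: le_trans (HM0 x) _; rewrite /M; have := ler_norm M0; lra.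
pose k := Num.bound (2 * M / eps).
have hk : 2 * M < k%:R * eps.
  by rewrite -ltr_pdivrMr //; apply: archi_boundP; apply: divr_ge0; lra.
exists (fun x => M * (abs_poly R k).[M^-1 * p x]).
  by apply: A_scale; apply: A_horner; apply: A_scale.
move=> x _; set t := M^-1 * p x.
have t1 : `|t| <= 1 by rewrite normrM gtr0_norm ?invr_gt0 // ler_pdivrMl // mulr1.
have -> : `|p x| = M * `|t| by rewrite normrM gtr0_norm ?invr_gt0 // mulrA divff ?gt_eqF // mul1r.
rewrite -mulrBr normrM gtr0_norm //.
have := abs_poly_approx k t1; have := normr_ge0 (`|t| - (abs_poly R k).[t]).
have := ler0n R k; nra.
Qed.

Lemma approximable_norm g : approximable g -> approximable (fun x => `|g x|).
Proof.
move=> ap; apply: approximable_closed => eps e0.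
have [p Ap H] := ap _ e0; exists (fun x => `|p x|); first exact: approximable_norm_A.
by move=> x Cx; apply: le_lt_trans (ler_dist_dist _ _) (H x Cx).
Qed.

Lemma approximable_min g1 g2 : approximable g1 -> approximable g2 ->
  approximable (fun x => Num.min (g1 x) (g2 x)).
Proof.
move=> ap1 ap2.
have -> : (fun x => Num.min (g1 x) (g2 x)) =
    (fun x => 2^-1 * (g1 x + g2 x) + (- 2^-1) * `|g1 x + (-1) * g2 x|).
  by apply/funext => x; rewrite minr_absE mulN1r; ring.
apply: approximableD; apply: approximableZ; first exact: approximableD.
by apply: approximable_norm; apply: approximableD => //; apply: approximableZ.
Qed.

Lemma approximable_max g1 g2 : approximable g1 -> approximable g2 ->
  approximable (fun x => Num.max (g1 x) (g2 x)).
Proof.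
move=> ap1 ap2.
have -> : (fun x => Num.max (g1 x) (g2 x)) =
    (fun x => 2^-1 * (g1 x + g2 x) + 2^-1 * `|g1 x + (-1) * g2 x|).
  by apply/funext => x; rewrite maxr_absE mulN1r; ring.
apply: approximableD; apply: approximableZ; first exact: approximableD.
by apply: approximable_norm; apply: approximableD => //; apply: approximableZ.
Qed.

Definition approx_cont g := approximable g /\ continuous g.

Lemma approx_cont_A f : A f -> approx_cont f.
Proof. by move=> Af; split; [exact: approximable_A | exact: A_continuous]. Qed.

Lemma approx_cont_bigmin (I : Type) (s : seq I) g0 (h : I -> T -> R) :
  approx_cont g0 -> (forall i, approx_cont (h i)) ->
  approx_cont (fun z => \big[Num.min/g0 z]_(i <- s) h i z).
Proof.
move=> g0B hB; elim: s => [|i s [IHa IHc]].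
  by under eq_fun do rewrite big_nil.
under eq_fun do rewrite big_cons; have [hia hic] := hB i; split.
  exact: approximable_min.
by move=> z; apply: continuous_min; [exact: hic | exact: IHc].
Qed.

Lemma approx_cont_bigmax (I : Type) (s : seq I) g0 (h : I -> T -> R) :
  approx_cont g0 -> (forall i, approx_cont (h i)) ->
  approx_cont (fun z => \big[Num.max/g0 z]_(i <- s) h i z).
Proof.
move=> g0B hB; elim: s => [|i s [IHa IHc]].
  by under eq_fun do rewrite big_nil.
under eq_fun do rewrite big_cons; have [hia hic] := hB i; split.
  exact: approximable_max.
by move=> z; apply: continuous_max; [exact: hic | exact: IHc].
Qed.

Variable f : T -> R.
Hypotheses (C_compact : compact C) (f_continuous : continuous f)
  (A_interp : forall x y, C x -> C y -> exists2 h, A h & h x = f x /\ h y = f y).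

(* Minimum of finitely many two-point interpolants of [f], chosen by compactness. *)
Lemma approx_cont_below x (e : R) : C x -> 0 < e ->
  exists2 g, approx_cont g & g x = f x /\ forall z, C z -> g z < f z + e.
Proof.
move=> Cx e0.
have /choice [H HH] : forall y, exists h, A h /\ h x = f x /\ (C y -> h y = f y).
  move=> y; case: (pselect (C y)) => Cy.
    by have [h Ah [hx hy]] := A_interp Cx Cy; exists h.
  by exists (fun=> f x); split; [exact: A_cst | split].
pose U y := [set z | H y z < f z + e].
have U_open y : C y -> open (U y).
  move=> _; have [/A_continuous Hc _] := HH y.
  by apply: open_lt_continuous => // z; apply: cvgD; [exact: f_continuous | exact: cvg_cst].
have C_U : C `<=` cover C U.
  by move=> y Cy; exists y => //; rewrite /U /=; have [_ [_ /(_ Cy) ->]] := HH y; rewrite ltrDl.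
have := C_compact; rewrite compact_cover => /(_ _ _ _ U_open C_U) [D _ C_D].
exists (fun z => \big[Num.min/f x]_(y <- D) H y z).
  by apply: approx_cont_bigmin => [|y]; apply: approx_cont_A; [exact: A_cst | case: (HH y)].
split; first by apply: bigmin_eq_id => y _; have [_ [-> _]] := HH y.
move=> z Cz; have [y Dy Uyz] := C_D z Cz.
by apply: le_lt_trans Uyz; apply: ge_bigmin_seq.
Qed.

(* Maximum of finitely many functions given by [approx_cont_below], again chosen by compactness. *)
Theorem stone_weierstrass : approximable f.
Proof.
apply: approximable_closed => eps e0.
have [e [e0' ee]] : exists e, 0 < e /\ e + e = eps by exists (eps / 2); split; lra.
case: (pselect (exists x0, C x0)) => [[x0 Cx0]|C0]; last first.
  exists (fun=> 0); first exact/approximable_A/A_cst.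
  by move=> z Cz; exfalso; apply: C0; exists z.
have /choice [G HG] : forall x, exists g, approx_cont g /\
    (C x -> g x = f x /\ forall z, C z -> g z < f z + e).
  move=> x; case: (pselect (C x)) => Cx.
    by have [g Bg [gx gz]] := approx_cont_below Cx e0'; exists g.
  by exists (fun=> 0); split => //; exact/approx_cont_A/A_cst.
pose V x := [set z | f z < G x z + e].
have V_open x : C x -> open (V x).
  move=> _; have [[_ Gc] _] := HG x.
  by apply: open_lt_continuous => // z; apply: cvgD; [exact: Gc | exact: cvg_cst].
have C_V : C `<=` cover C V.
  by move=> x Cx; exists x => //; rewrite /V /=; have [_ /(_ Cx) [-> _]] := HG x; rewrite ltrDl.
have := C_compact; rewrite compact_cover => /(_ _ _ _ V_open C_V) [D D_C C_D].
exists (fun z => \big[Num.max/G x0 z]_(x <- D) G x z).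
  exact: (approx_cont_bigmax D (HG x0).1 (fun x => (HG x).1)).1.
move=> z Cz; rewrite /= ltr_norml; apply/andP; split.
- suff : \big[Num.max/G x0 z]_(x <- D) G x z < f z + e by lra.
  rewrite big_seq; apply: bigmax_lt => [|x /D_C]; first by have [_ /(_ Cx0) [_ ->]] := HG x0.
  by rewrite inE => Cx; have [_ /(_ Cx) [_ ->]] := HG x.
- have [x Dx Vxz] := C_D z Cz; rewrite /V /= in Vxz.
  suff : G x z <= \big[Num.max/G x0 z]_(y <- D) G y z by lra.
  exact: le_bigmax_seq.
Qed.

End StoneWeierstrass.

Section DotProduct.
Variables (R : realType) (n : nat).
Implicit Types u v w : 'cV[R]_n.

Lemma dotvDl w1 w2 v : dotv (w1 + w2) v = dotv w1 v + dotv w2 v.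
Proof. by rewrite /dotv -big_split; apply: eq_bigr => i _; rewrite !mxE mulrDl. Qed.

Lemma dotvNl w v : dotv (- w) v = - dotv w v.
Proof. by rewrite /dotv -sumrN; apply: eq_bigr => i _; rewrite !mxE mulNr. Qed.

Lemma dotvBl w1 w2 v : dotv (w1 - w2) v = dotv w1 v - dotv w2 v.
Proof. by rewrite dotvDl dotvNl. Qed.

Lemma dotvZl c w v : dotv (c *: w) v = c * dotv w v.
Proof. by rewrite /dotv mulr_sumr; apply: eq_bigr => i _; rewrite !mxE mulrA. Qed.

Lemma dotv0l v : dotv 0 v = 0.
Proof. by rewrite -(scale0r 0) dotvZl mul0r. Qed.

Lemma dotvC u v : dotv u v = dotv v u.
Proof. by apply: eq_bigr => i _; rewrite mulrC. Qed.

Lemma dotvBr w u v : dotv w (u - v) = dotv w u - dotv w v.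
Proof. by rewrite !(dotvC w) dotvBl. Qed.

Lemma dotvNr w v : dotv w (- v) = - dotv w v.
Proof. by rewrite !(dotvC w) dotvNl. Qed.

Lemma dotvv_gt0 v : v != 0 -> 0 < dotv v v.
Proof.
move=> v0; have sq_ge0 i : 0 <= v i ord0 * v i ord0 by rewrite -expr2 sqr_ge0.
rewrite lt_def sumr_ge0 // andbT; apply: contra v0.
rewrite psumr_eq0 // => /allP v_eq0; apply/eqP/matrixP => i j.
by rewrite (ord1 j) mxE; move: (v_eq0 i (mem_index_enum _)); rewrite mulf_eq0 orbb => /eqP.
Qed.

Lemma dotv_continuous w : continuous (dotv w).
Proof.
rewrite /dotv; apply: (@continuous_big R^o _ +%R 0 xpredT) => [|i _].
  exact: add_continuous.
by move=> v; apply: continuousM; [exact: cst_continuous | exact: coord_continuous].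
Qed.

End DotProduct.

Lemma cosMcos (R : realType) (x y : R) :
  cos x * cos y = 2^-1 * cos (x - y) + 2^-1 * cos (x + y).
Proof. by rewrite cosB cosD; field. Qed.

Lemma cos_quarter_phases (R : realType) (a b : R) :
  \sum_(l < 2) cos (a + l%:R * (pi / 2)) * cos (b + l%:R * (pi / 2)) = cos (a - b).
Proof.
by rewrite !big_ord_recl big_ord0 /= mul0r !addr0 mul1r !cosDpihalf cosB; ring.
Qed.

Section TrigPoly.
Variables (R : realType) (n : nat).
Local Notation V := 'cV[R]_n.

Inductive trig_poly : (V -> R) -> Prop :=
| trig_poly_cos w t : trig_poly (fun v => cos (dotv w v + t))
| trig_polyD f g : trig_poly f -> trig_poly g -> trig_poly (fun v => f v + g v)
| trig_polyZ c f : trig_poly f -> trig_poly (fun v => c * f v).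

Lemma trig_poly_cst c : trig_poly (fun=> c).
Proof.
have -> : (fun=> c) = (fun v => c * cos (dotv 0 v + 0)) :> (V -> R).
  by apply/funext => v; rewrite dotv0l addr0 cos0 mulr1.
exact/trig_polyZ/trig_poly_cos.
Qed.

Lemma trig_poly_cosM w t f : trig_poly f ->
  trig_poly (fun v => cos (dotv w v + t) * f v).
Proof.
elim=> [w' t'|f1 f2 _ IH1 _ IH2|c f1 _ IH].
- under eq_fun do rewrite cosMcos.
  have dotvE v : dotv w v + t - (dotv w' v + t') = dotv (w - w') v + (t - t') /\
                 dotv w v + t + (dotv w' v + t') = dotv (w + w') v + (t + t').
    by rewrite dotvBl dotvDl; split; ring.
  under eq_fun do rewrite (dotvE _).1 (dotvE _).2.
  by apply: trig_polyD; apply: trig_polyZ; apply: trig_poly_cos.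
- by under eq_fun do rewrite mulrDr; exact: trig_polyD.
- by under eq_fun do rewrite mulrCA; exact: trig_polyZ.
Qed.

Lemma trig_polyM f g : trig_poly f -> trig_poly g -> trig_poly (fun v => f v * g v).
Proof.
move=> + tg; elim=> [w t|f1 f2 _ IH1 _ IH2|c f1 _ IH].
- exact: trig_poly_cosM.
- by under eq_fun do rewrite mulrDl; exact: trig_polyD.
- by under eq_fun do rewrite -mulrA; exact: trig_polyZ.
Qed.

Lemma trig_poly_continuous f : trig_poly f -> continuous f.
Proof.
elim=> [w t|f1 f2 _ IH1 _ IH2|c f1 _ IH] v.
- apply: continuous_comp; last exact: continuous_cos.
  by apply: continuousD; [exact: dotv_continuous | exact: cst_continuous].
- by apply: continuousD; [exact: IH1 | exact: IH2].
- by apply: continuousM; [exact: cst_continuous | exact: IH].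
Qed.

Lemma trig_poly_bounded f : trig_poly f -> exists M, forall v, `|f v| <= M.
Proof.
elim=> [w t|f1 f2 _ [M1 H1] _ [M2 H2]|c f1 _ [M H]].
- by exists 1 => v; exact: cos_max.
- by exists (M1 + M2) => v; apply: le_trans (ler_normD _ _) _; exact: lerD.
- by exists (`|c| * M) => v; rewrite normrM; exact: ler_wpM2l.
Qed.

(* The phase [- dotv w v] makes the generator equal to [1] at [v] and to [cos pi = -1] at [u]. *)
Lemma trig_poly_interp f u v : exists2 h, trig_poly h & h u = f u /\ h v = f v.
Proof.
have [<-|uv] := eqVneq u v; first by exists (fun=> f u); [exact: trig_poly_cst | split].
have uv0 : u - v != 0 by rewrite subr_eq0.
pose w := (pi / dotv (u - v) (u - v)) *: (u - v).
pose p x := cos (dotv w x - dotv w v).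
have pu : p u = -1 by rewrite /p -dotvBr dotvZl mulfVK ?cospi // gt_eqF ?dotvv_gt0.
have pv : p v = 1 by rewrite /p subrr cos0.
pose b := (f u - f v) / (p u - p v).
exists (fun x => (f v - b * p v) + b * p x).
  by apply: trig_polyD; [exact: trig_poly_cst | exact/trig_polyZ/trig_poly_cos].
by rewrite /b pu pv; split; field.
Qed.

Theorem trig_poly_dense f (C : set V) : compact C -> continuous f ->
  approximable trig_poly C f.
Proof.
move=> Cc fc; apply: stone_weierstrass => //.
- exact: trig_poly_cst.
- exact: trig_polyD.
- exact: trig_polyZ.
- exact: trig_polyM.
- exact: trig_poly_continuous.
- exact: trig_poly_bounded.
- by move=> x y _ _; exact: trig_poly_interp.
Qed.

Lemma trig_poly_even f : trig_poly f -> exists s : seq (R * V),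
  forall v, (f v + f (- v)) / 2 = \sum_(q <- s) q.1 * cos (dotv q.2 v).
Proof.
elim=> [w t|f1 f2 _ [s1 H1] _ [s2 H2]|c f1 _ [s H]].
- exists [:: (cos t, w)] => v.
  by rewrite big_seq1 /= dotvNr !cosD cosN sinN; field.
- by exists (s1 ++ s2) => v; rewrite big_cat /= -H1 -H2; field.
- exists [seq (c * q.1, q.2) | q <- s] => v; rewrite big_map.
  by under eq_bigr do rewrite -mulrA; rewrite -mulr_sumr -H; field.
Qed.

End TrigPoly.

Lemma even_cos_poly_approx (R : realType) (n : nat) (f : 'cV[R]_n -> R)
    (C : set 'cV[R]_n) (eps : R) :
  compact C -> continuous f -> (forall v, f (- v) = f v) -> 0 < eps ->
  exists s : seq (R * 'cV[R]_n),
    forall v, C v -> `|f v - \sum_(q <- s) q.1 * cos (dotv q.2 v)| < eps.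
Proof.
move=> Cc fc f_even e0.
have CNc : compact (C `|` -%R @` C).
  apply: compactU => //; apply: continuous_compact => //.
  exact: continuous_subspaceT opp_continuous.
have [p tp Hp] := trig_poly_dense CNc fc e0.
have [s Hs] := trig_poly_even tp.
exists s => v Cv; rewrite -Hs.
have h1 := Hp v (or_introl Cv).
have := Hp (- v) (or_intror (ex_intro2 _ _ v Cv erefl)); rewrite f_even => h2.
have -> : f v - (p v + p (- v)) / 2 = ((f v - p v) + (f v - p (- v))) / 2 by field.
rewrite normrM normfV (ger0_norm (ler0n _ 2)).
have := ler_normD (f v - p v) (f v - p (- v)); lra.
Qed.

Section DifferenceKernel.
Variables (R : realType) (n : nat).
Local Notation V := 'cV[R]_(n + n).

Definition vdiff (z : V) : 'cV[R]_n := usubmx z - dsubmx z.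

Lemma vdiff_col x y : vdiff (col_mx x y) = x - y.
Proof. by rewrite /vdiff col_mxKu col_mxKd. Qed.

Lemma vdiff_continuous : continuous vdiff.
Proof.
apply: continuous_mx_entries => i j z; rewrite /vdiff.
under eq_fun do rewrite !mxE.
by apply: continuousB; apply: coord_continuous.
Qed.

Lemma OmegaS_mxE (w : 'cV[R]_n) (z : V) :
  OmegaS_mx w *m z = col_mx (w^T *m usubmx z) (- (w^T *m dsubmx z)).
Proof.
by rewrite -{1}(vsubmxK z) /OmegaS_mx mul_block_col !mul0mx addr0 add0r mulNmx.
Qed.

Lemma dotv_trmx (w u : 'cV[R]_n) : (w^T *m u) ord0 ord0 = dotv w u.
Proof. by rewrite !mxE; apply: eq_bigr => j _; rewrite mxE. Qed.

Lemma M_OmegaS_cos (w : 'cV[R]_n) (t : R) :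
  M_OmegaS (fun z : V => cos (dotv w (vdiff z) + t)).
Proof.
pose g (a : 'cV[R]_(1 + 1)) := cos (a (lshift 1 ord0) ord0 + a (rshift 1 ord0) ord0 + t).
exists 1%N, (fun=> 1), (fun=> OmegaS_mx w), (fun=> g); split; first by exists w.
split=> [_ a|].
  apply: continuous_comp; last exact: continuous_cos.
  apply: continuousD; last exact: cst_continuous.
  by apply: continuousD; apply: coord_continuous.
apply/funext => z; rewrite big_ord1 mul1r OmegaS_mxE /g col_mxEu col_mxEd.
by rewrite dotv_trmx mxE dotv_trmx /vdiff dotvBr.
Qed.

Lemma M_OmegaSZ c f : M_OmegaS f -> M_OmegaS (fun z : V => c * f z).
Proof.
move=> [m [c0 [A [g [HA [Hg ->]]]]]]; exists m, (fun i => c * c0 i), A, g.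
do 2 split => //; apply/funext => z.
by rewrite mulr_sumr; apply: eq_bigr => i _; rewrite mulrA.
Qed.

Lemma M_OmegaSD f1 f2 : M_OmegaS f1 -> M_OmegaS f2 ->
  M_OmegaS (fun z : V => f1 z + f2 z).
Proof.
move=> [m1 [c1 [A1 [g1 [HA1 [Hg1 ->]]]]]] [m2 [c2 [A2 [g2 [HA2 [Hg2 ->]]]]]].
pose glue T (a1 : 'I_m1 -> T) (a2 : 'I_m2 -> T) (i : 'I_(m1 + m2)) :=
  match fintype.split i with inl i1 => a1 i1 | inr i2 => a2 i2 end.
exists (m1 + m2)%N, (glue _ c1 c2), (glue _ A1 A2), (glue _ g1 g2).
split; first by move=> i; rewrite /glue; case: (fintype.split i).
split; first by move=> i; rewrite /glue; case: (fintype.split i).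
apply/funext => z; rewrite big_split_ord /glue.
have split_l i : fintype.split (lshift m2 i) = inl i := unsplitK (inl i).
have split_r i : fintype.split (rshift m1 i) = inr i := unsplitK (inr i).
by congr (_ + _); apply: eq_bigr => i _; rewrite ?split_l ?split_r.
Qed.

Lemma M_OmegaS_trig_poly f : trig_poly f -> M_OmegaS (fun z : V => f (vdiff z)).
Proof.
elim=> [w t|f1 f2 _ IH1 _ IH2|c f1 _ IH].
- exact: M_OmegaS_cos.
- exact: M_OmegaSD.
- exact: M_OmegaSZ.
Qed.

(* The dummy term [(0, 0)] only serves to make [M1] positive. *)
Lemma cos_poly_quarter_phases (s : seq (R * 'cV[R]_n)) :
  exists (M1 : nat) (c : 'I_M1 -> R) (w : 'I_M1 -> 'cV[R]_n), (0 < M1)%N /\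
    forall x y : 'cV[R]_n,
      \sum_(j < M1) \sum_(l < 2)
         c j / 2%:R * cos (dotv (w j) x + l%:R * (pi / 2)) *
         cos (dotv (w j) y + l%:R * (pi / 2)) =
      \sum_(q <- s) q.1 * cos (dotv q.2 (x - y)).
Proof.
pose s' := (0, 0) :: s; pose q j := nth (0, 0) s' j.
exists (size s'), (fun j => 2 * (q j).1), (fun j => (q j).2); split => // x y.
transitivity (\sum_(j < size s') (q j).1 * cos (dotv (q j).2 (x - y))).
  apply: eq_bigr => j _; under eq_bigr do rewrite -mulrA.
  by rewrite -mulr_sumr cos_quarter_phases dotvBr; field.
rewrite [RHS](_ : _ = \sum_(q <- s') q.1 * cos (dotv q.2 (x - y))).
  by rewrite (big_nth (0, 0)) big_mkord.
by rewrite big_cons mul0r add0r.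
Qed.

End DifferenceKernel.

Unset Implicit Arguments.

Theorem theorem5p1 (R : realType) (n : nat) (k : 'cV[R]_(n + n) -> R) :
  (0 < n)%N ->
  continuous k ->
  (exists kt : 'cV[R]_n -> R, continuous kt /\
     forall x y : 'cV[R]_n, k (col_mx x y) = kt (x - y)) ->
  in_compact_closure (@M_OmegaS R n) k /\
  ((forall x y : 'cV[R]_n, k (col_mx x y) = k (col_mx y x)) ->
   forall (K : set 'cV[R]_(n + n)) (eps : R), compact K -> 0 < eps ->
   exists (M1 M2 : nat) (c : 'I_M1 -> R) (w : 'I_M1 -> 'cV[R]_n) (t : 'I_M2 -> R),
     (0 < M1)%N /\ (0 < M2)%N /\
     forall x y : 'cV[R]_n, K (col_mx x y) ->
       `| k (col_mx x y) -
          \sum_(j < M1) \sum_(l < M2)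
             c j / M2%:R * cos (dotv (w j) x + t l) * cos (dotv (w j) y + t l) | < eps).
Proof.
move=> _ _ [kt [kt_cont k_kt]].
have k_vdiff z : k z = kt (vdiff z) by rewrite -{1}(vsubmxK z) k_kt.
have vdiff_compact K : compact K -> compact (@vdiff R n @` K).
  by move=> Kc; apply: continuous_compact => //; exact/continuous_subspaceT/vdiff_continuous.
split=> [K eps Kc e0|k_sym K eps Kc e0].
  have [p tp Hp] := trig_poly_dense (vdiff_compact K Kc) kt_cont e0.
  exists (fun z => p (vdiff z)); split; first exact: M_OmegaS_trig_poly.
  by move=> z Kz; rewrite k_vdiff; apply: Hp; exists z.
have kt_even v : kt (- v) = kt v by have := k_sym v 0; rewrite !k_kt subr0 sub0r.
have [s Hs] := even_cos_poly_approx (vdiff_compact K Kc) kt_cont kt_even e0.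
have [M1 [c [w [M1_gt0 Hcw]]]] := cos_poly_quarter_phases s.
exists M1, 2%N, c, w, (fun l => l%:R * (pi / 2)); do 2 split => //.
move=> x y Kxy; rewrite Hcw k_kt; apply: Hs.
by exists (col_mx x y) => //; exact: vdiff_col.
Qed.
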